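(* Let $n\ge 2$, let $\Gamma\in\mathcal{M}_n(\mathbb{R})$ be symmetric with entries in $[0,1]$, zero diagonal, and at least one strictly positive off-diagonal entry in each row, such that the weighted graph with weight matrix $\Gamma$ is connected. Let $\boldsymbol{\eta}=\Gamma\mathbf{1}_n$, $L=\operatorname{diag}(\boldsymbol{\eta})-\Gamma$, let $\lambda,\mu>0$, $A=\lambda\mathsf{I}_n+\mu L$, and let $\mathsf{P}_a\coloneqq\operatorname{diag}(A)=\lambda\mathsf{I}_n+\mu\operatorname{diag}(\boldsymbol{\eta})$. Then every eigenvalue $\theta$ of $\mathsf{P}_a^{-1}A$ satisfies \[ \frac{\lambda}{\lambda+\mu\max\boldsymbol{\eta}}\le\theta\le\min\Big\{2,\ \frac{n}{n-1}\,\frac{\rho(L)}{a(L)}\Big\}. \]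
   Context: $\mathbf{1}_n$ is the all-ones vector, $\mathsf{I}_n$ the identity. $\rho(L)$ is the spectral radius (largest eigenvalue) of $L$, and $a(L)$ is the algebraic connectivity of $L$, i.e. its second smallest eigenvalue counted with multiplicity (positive since the graph is connected). *)

From HB Require Import structures.
From mathcomp Require Import all_boot all_order all_algebra.
Set Implicit Arguments. Unset Strict Implicit. Unset Printing Implicit Defensive.
Import Order.TTheory GRing.Theory Num.Theory.
Local Open Scope ring_scope.

Definition wconnected (R : numDomainType) (n : nat) (G : 'M[R]_n) : Prop :=
  forall i j : 'I_n, connect (fun x y : 'I_n => 0 < G x y) i j.

Definition degvec (R : nzRingType) (n : nat) (G : 'M[R]_n) : 'cV[R]_n :=
  G *m const_mx 1.

Definition laplacian (R : nzRingType) (n : nat) (G : 'M[R]_n) : 'M[R]_n :=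
  diag_mx (degvec G)^T - G.

Definition is_sorted_spectrum (R : numDomainType) (n : nat) (M : 'M[R]_n)
    (s : seq R) : Prop :=
  sorted <=%R s /\ char_poly M = \prod_(x <- s) ('X - x%:P).

From HB Require Import structures.
From mathcomp Require Import all_boot all_order all_algebra.
From mathcomp Require Import complex.
From mathcomp Require Import ring lra.
Import Order.TTheory GRing.Theory Num.Theory Num.Def.
Local Open Scope ring_scope.
Set Implicit Arguments. Unset Strict Implicit. Unset Printing Implicit Defensive.

(* An eigenvalue theta of Pa^-1 A is the generalized Rayleigh quotient
     theta = (lambda |w|^2 + mu w L w^T) / (lambda |w|^2 + mu sum_i eta_i w_i^2)
   at a nonzero w with w A = theta w Pa.  Since
     w L w^T = 1/2 sum_ij Gamma_ij (w_i - w_j)^2,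
   the Laplacian form lies between 0 and 2 sum_i eta_i w_i^2, and it is at most
   rho(L) |w|^2.  Fiedler's bound a(L) <= n/(n-1) eta_i, obtained by testing a
   vector of span(1, e_i) orthogonal to the bottom eigenvector of L, gives
   sum_i eta_i w_i^2 >= (n-1)/n a(L) |w|^2; connectivity makes a(L) > 0.  The
   spectral facts come from the spectral theorem for Hermitian matrices, which is
   applied over R[i] and transferred back to R. *)

Section BilinearForm.
Variables (R : comNzRingType) (n : nat).
Implicit Types (M N : 'M[R]_n) (u v : 'rV[R]_n).

Definition mxform M u v : R := (u *m M *m v^T) 0 0.

Lemma mxformE M u v : mxform M u v = \sum_i \sum_j u 0 i * M i j * v 0 j.
Proof.
rewrite /mxform mxE exchange_big; apply: eq_bigr => i _; rewrite mxE mulr_suml.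
by apply: eq_bigr => j _; rewrite !mxE.
Qed.

Lemma mxformDm M N u v : mxform (M + N) u v = mxform M u v + mxform N u v.
Proof. by rewrite /mxform mulmxDr mulmxDl mxE. Qed.

Lemma mxformBm M N u v : mxform (M - N) u v = mxform M u v - mxform N u v.
Proof. by rewrite /mxform mulmxBr mulmxBl !mxE. Qed.

Lemma mxformZm a M u v : mxform (a *: M) u v = a * mxform M u v.
Proof. by rewrite /mxform -scalemxAr -scalemxAl mxE. Qed.

Lemma mxformZl a M u v : mxform M (a *: u) v = a * mxform M u v.
Proof. by rewrite /mxform -!scalemxAl mxE. Qed.

Lemma mxformZr a M u v : mxform M u (a *: v) = a * mxform M u v.
Proof. by rewrite /mxform [_^T]linearZ /= -scalemxAr mxE. Qed.

Lemma mxform_diag (d : 'rV[R]_n) u v :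
  mxform (diag_mx d) u v = \sum_i d 0 i * (u 0 i * v 0 i).
Proof.
rewrite mxformE; apply: eq_bigr => i _; rewrite (bigD1 i) //= big1 => [|j ji].
  by rewrite addr0 mxE eqxx mulr1n; ring.
by rewrite mxE eq_sym (negbTE ji) mulr0n mulr0 mul0r.
Qed.

Lemma mxform_scalar a u v : mxform a%:M u v = a * \sum_i u 0 i * v 0 i.
Proof.
rewrite -diag_const_mx mxform_diag mulr_sumr.
by apply: eq_bigr => i _; rewrite mxE.
Qed.

Lemma mxform_pencil a b M u :
  mxform (a%:M + b *: M) u u = a * \sum_i u 0 i ^+ 2 + b * mxform M u u.
Proof.
rewrite mxformDm mxformZm mxform_scalar.
by under eq_bigr do rewrite -expr2.
Qed.

Lemma mxform_delta M i j : mxform M (delta_mx 0 i) (delta_mx 0 j) = M i j.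
Proof. by rewrite /mxform -rowE trmx_delta -colE !mxE. Qed.

End BilinearForm.

Lemma map_mxform (R S : comNzRingType) (f : {rmorphism R -> S}) n
    (M : 'M[R]_n) u v :
  f (mxform M u v) = mxform (map_mx f M) (map_mx f u) (map_mx f v).
Proof. by rewrite /mxform map_trmx -!map_mxM [RHS]mxE. Qed.

Section LaplacianForm.
Variables (R : comNzRingType) (n : nat) (G : 'M[R]_n).
Hypothesis Gsym : G^T = G.
Implicit Types (u v : 'rV[R]_n).

Local Notation D := (diag_mx (degvec G)^T).
Local Notation L := (laplacian G).

Lemma degvecE i : degvec G i 0 = \sum_j G i j.
Proof. by rewrite mxE; apply: eq_bigr => j _; rewrite mxE mulr1. Qed.

Lemma laplacianE i j : L i j = (i == j)%:R * degvec G i 0 - G i j.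
Proof. by rewrite !mxE mulrC mulr_natr. Qed.

Lemma mxform_laplacian u v : mxform L u v = mxform D u v - mxform G u v.
Proof. exact: mxformBm. Qed.

Lemma mxform_degree u v :
  mxform D u v = \sum_i degvec G i 0 * (u 0 i * v 0 i).
Proof. by rewrite mxform_diag; apply: eq_bigr => i _; rewrite mxE. Qed.

Let G_sym i j : G j i = G i j.
Proof. by rewrite -{1}Gsym mxE. Qed.

Lemma sum_edges_form (s : R) u v :
  \sum_i \sum_j G i j * ((u 0 i + s * u 0 j) * (v 0 i + s * v 0 j)) =
  (1 + s ^+ 2) * mxform D u v + 2 * s * mxform G u v.
Proof.
have tail_deg : \sum_i \sum_j G i j * (u 0 j * v 0 j) = mxform D u v.
  rewrite mxform_degree exchange_big; apply: eq_bigr => j _.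
  by rewrite degvecE mulr_suml; apply: eq_bigr => i _; rewrite G_sym.
have head_deg : \sum_i \sum_j G i j * (u 0 i * v 0 i) = mxform D u v.
  by rewrite mxform_degree; apply: eq_bigr => i _; rewrite degvecE mulr_suml.
have cross : \sum_i \sum_j G i j * (u 0 j * v 0 i) = mxform G u v.
  rewrite mxformE exchange_big; apply: eq_bigr => j _; apply: eq_bigr => i _.
  by rewrite G_sym; ring.
transitivity (\sum_i \sum_j G i j * (u 0 i * v 0 i)
  + s ^+ 2 * \sum_i \sum_j G i j * (u 0 j * v 0 j)
  + s * (\sum_i \sum_j u 0 i * G i j * v 0 j
         + \sum_i \sum_j G i j * (u 0 j * v 0 i))).
  rewrite mulrDr !mulr_sumr -!big_split; apply: eq_bigr => i _.
  rewrite !mulr_sumr -!big_split; apply: eq_bigr => j _ /=; ring.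
by rewrite head_deg tail_deg cross -mxformE; ring.
Qed.

Lemma mxform_laplacian_edges u v :
  mxform L u v *+ 2 =
  \sum_i \sum_j G i j * ((u 0 i - u 0 j) * (v 0 i - v 0 j)).
Proof.
have := sum_edges_form (-1) u v.
under eq_bigr => i _ do under eq_bigr => j _ do rewrite !mulN1r.
by move=> ->; rewrite mxform_laplacian; ring.
Qed.

Lemma tr_laplacian : L^T = L.
Proof. by rewrite /laplacian linearB /= tr_diag_mx Gsym. Qed.

Lemma laplacian_row_sum i : \sum_j L i j = 0.
Proof.
rewrite (eq_bigr _ (fun j _ => laplacianE i j)) sumrB -degvecE; apply/eqP.
rewrite subr_eq0 (bigD1 i) //= big1 => [|j ji]; first by rewrite eqxx mul1r addr0.
by rewrite eq_sym (negbTE ji) mul0r.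
Qed.

Lemma laplacian_mul_const a : L *m const_mx a = 0 :> 'cV[R]_n.
Proof.
apply/colP => i; rewrite [LHS]mxE [RHS]mxE.
transitivity ((\sum_j L i j) * a); last by rewrite laplacian_row_sum mul0r.
by rewrite mulr_suml; apply: eq_bigr => j _; rewrite [const_mx a j 0]mxE.
Qed.

Lemma const_mul_laplacian a : const_mx a *m L = 0 :> 'rV[R]_n.
Proof.
by rewrite -[L]tr_laplacian -trmx_const -trmx_mul laplacian_mul_const trmx0.
Qed.

Lemma mxform_laplacian_shift a b u v :
  mxform L (const_mx a + u) (const_mx b + v) = mxform L u v.
Proof.
rewrite /mxform mulmxDl const_mul_laplacian add0r [_^T]linearD /= trmx_const.
by rewrite mulmxDr -mulmxA laplacian_mul_const mulmx0 add0r.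
Qed.

Lemma mxform_laplacian_const_delta a b a' b' i :
  mxform L (const_mx a + b *: delta_mx 0 i) (const_mx a' + b' *: delta_mx 0 i) =
  b * b' * L i i.
Proof.
by rewrite mxform_laplacian_shift mxformZl mxformZr mxform_delta mulrA.
Qed.

Lemma laplacian_diag i : G i i = 0 -> L i i = degvec G i 0.
Proof. by move=> Gii; rewrite laplacianE eqxx mul1r Gii subr0. Qed.

Lemma diag_laplacian_pencil (a b : R) : (forall i, G i i = 0) ->
  diag_mx (\row_i (a%:M + b *: L) i i) = a%:M + b *: D.
Proof.
move=> G_diag; apply/matrixP => i j.
by rewrite !mxE eqxx G_diag subr0 !mulr1n mulrnDl mulrnAr.
Qed.

End LaplacianForm.

Section RealLaplacianForm.
Variables (R : realDomainType) (n : nat) (G : 'M[R]_n).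
Hypotheses (Gsym : G^T = G) (G_ge0 : forall i j, 0 <= G i j).
Implicit Types (w : 'rV[R]_n).

Local Notation D := (diag_mx (degvec G)^T).
Local Notation L := (laplacian G).

Lemma mxform_laplacian_ge0 w : 0 <= mxform L w w.
Proof.
rewrite -(pmulrn_lge0 _ (isT : 0 < 2)%N) mxform_laplacian_edges //.
by do 2!apply: sumr_ge0 => ? _; rewrite mulr_ge0 // -expr2 sqr_ge0.
Qed.

Lemma mxform_laplacian_le w : mxform L w w <= 2 * mxform D w w.
Proof.
have : 0 <= \sum_i \sum_j G i j * ((w 0 i + 1 * w 0 j) * (w 0 i + 1 * w 0 j)).
  by do 2!apply: sumr_ge0 => ? _; rewrite mulr_ge0 // -expr2 sqr_ge0.
rewrite sum_edges_form // expr1n mxform_laplacian; lra.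
Qed.

End RealLaplacianForm.

Lemma mxform_degree_le_bigmax (R : realDomainType) n (G : 'M[R]_n) (w : 'rV[R]_n) :
  mxform (diag_mx (degvec G)^T) w w <=
  \big[Num.max/0]_(i < n) degvec G i 0 * \sum_i w 0 i ^+ 2.
Proof.
rewrite mxform_degree mulr_sumr; apply: ler_sum => i _.
by rewrite -expr2 ler_wpM2r ?sqr_ge0 // (le_bigmax _ (fun i => degvec G i 0)).
Qed.

Lemma diag_laplacian_pencil_unit (R : realFieldType) n (G : 'M[R]_n) (a b : R) :
  (forall i j, 0 <= G i j) -> (forall i, G i i = 0) -> 0 < a -> 0 <= b ->
  diag_mx (\row_i (a%:M + b *: laplacian G) i i) \in unitmx.
Proof.
move=> G_ge0 G_diag a_gt0 b_ge0; rewrite unitmxE det_diag unitfE.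
apply/prodf_neq0 => i _; rewrite !mxE eqxx !mulr1n G_diag subr0.
rewrite gt_eqF // ltr_wpDr // mulr_ge0 // sumr_ge0 // => j _.
by rewrite mxE mulr1.
Qed.

Lemma sumr_sqr_gt0 (R : realDomainType) n (w : 'rV[R]_n) :
  w != 0 -> 0 < \sum_i w 0 i ^+ 2.
Proof.
move=> w_neq0; have /existsP [j wj] : [exists j, w 0 j != 0].
  apply: contraR w_neq0 => /existsPn w0; apply/eqP/rowP => j.
  by rewrite mxE; apply/eqP/negPn/w0.
rewrite (bigD1 j) //= ltr_wpDr ?sumr_ge0 // => [i _|]; first exact: sqr_ge0.
by rewrite exprn_even_gt0 ?wj.
Qed.

Lemma eigenvalue_invmx_mxform (F : fieldType) n (P A : 'M[F]_n) (theta : F) :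
  P \in unitmx -> eigenvalue (invmx P *m A) theta ->
  exists2 w : 'rV[F]_n, w != 0 & mxform A w w = theta * mxform P w w.
Proof.
move=> P_unit /eigenvalueP [v v_eig v_neq0]; exists (v *m invmx P).
  by apply: contra v_neq0 => /eqP w0; rewrite -(mulmxKV P_unit v) w0 mul0mx.
by rewrite /mxform mulmxKV // -(mulmxA v) v_eig -scalemxAl mxE.
Qed.

Lemma char_poly_similar (R : comNzRingType) n (P Q D : 'M[R]_n) :
  Q *m P = 1%:M -> char_poly (Q *m D *m P) = char_poly D.
Proof.
move=> QP; rewrite /char_poly /char_poly_mx.
have -> : 'X%:M - map_mx polyC (Q *m D *m P) =
    map_mx polyC Q *m ('X%:M - map_mx polyC D) *m map_mx polyC P.
  rewrite mulmxBr mulmxBl !map_mxM; congr (_ - _).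
  by rewrite mul_mx_scalar -scalemxAl -map_mxM QP map_mx1 scalemx1.
by rewrite !det_mulmx mulrAC -det_mulmx -map_mxM QP map_mx1 det1 mul1r.
Qed.

Section HermitianSpectrum.
Local Open Scope sesquilinear_scope.
Variables (C : numClosedFieldType) (n : nat) (M : 'M[C]_n).
Hypothesis Mherm : M \is hermsymmx.
Implicit Types (u : 'rV[C]_n).

Local Notation U := (spectralmx M).
Local Notation d := (spectral_diag M).

Lemma mxform_conjmx (P N : 'M[C]_n) u :
  mxform (P^t* *m N *m P) u (map_mx conjC u) =
  mxform N (u *m P^t*) (map_mx conjC (u *m P^t*)).
Proof.
have tr_conj : (map_mx conjC (u *m P^t*))^T = P *m (map_mx conjC u)^T.
  apply/matrixP => i j; rewrite !mxE rmorph_sum; apply: eq_bigr => k _.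
  by rewrite !mxE rmorphM /= conjCK mulrC.
by rewrite /mxform tr_conj !mulmxA.
Qed.

Lemma spectralmx_adjoint_mul : U^t* *m U = 1%:M.
Proof.
by rewrite -invmx_unitary ?spectral_unitarymx // mulVmx // spectral_unit.
Qed.

Lemma hermitian_spectral_decomposition : M = U^t* *m diag_mx d *m U.
Proof.
rewrite -invmx_unitary ?spectral_unitarymx //.
exact/orthomx_spectralP/hermitian_normalmx/Mherm.
Qed.

Lemma mxform_hermitian u :
  mxform M u (map_mx conjC u) = \sum_j d 0 j * `|(u *m U^t*) 0 j| ^+ 2.
Proof.
rewrite {1}hermitian_spectral_decomposition mxform_conjmx mxform_diag.
by apply: eq_bigr => j _; rewrite normCK !mxE.
Qed.

Lemma sum_normC_spectral u :
  \sum_i `|u 0 i| ^+ 2 = \sum_j `|(u *m U^t*) 0 j| ^+ 2.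
Proof.
have sumE (v : 'rV[C]_n) : \sum_i `|v 0 i| ^+ 2 = mxform 1%:M v (map_mx conjC v).
  by rewrite mxform_scalar mul1r; apply: eq_bigr => i _; rewrite normCK !mxE.
by rewrite !sumE -mxform_conjmx mulmx1 spectralmx_adjoint_mul.
Qed.

Lemma char_poly_hermitian : char_poly M = \prod_j ('X - (d 0 j)%:P).
Proof.
rewrite {1}hermitian_spectral_decomposition.
rewrite char_poly_similar ?spectralmx_adjoint_mul //.
rewrite char_poly_trig ?diag_mx_is_trig //.
by apply: eq_bigr => j _; rewrite !mxE eqxx mulr1n.
Qed.

Lemma spectral_diag_mxform j :
  d 0 j = mxform M (row j U) (map_mx conjC (row j U)).
Proof.
rewrite mxform_hermitian -row_mul (unitarymxP (spectral_unitarymx M)) row1.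
rewrite (bigD1 j) //= big1 => [|k kj].
  by rewrite mxE !eqxx normr1 expr1n mulr1 addr0.
by rewrite mxE (negbTE kj) andbF normr0 expr0n mulr0.
Qed.

Lemma mxform_hermitian_le c u : (forall j, d 0 j <= c) ->
  mxform M u (map_mx conjC u) <= c * \sum_i `|u 0 i| ^+ 2.
Proof.
move=> d_le; rewrite mxform_hermitian sum_normC_spectral mulr_sumr.
by apply: ler_sum => j _; rewrite ler_wpM2r ?exprn_ge0.
Qed.

Lemma mxform_hermitian_ge c k u : (forall j, j != k -> c <= d 0 j) ->
  (u *m U^t*) 0 k = 0 ->
  c * \sum_i `|u 0 i| ^+ 2 <= mxform M u (map_mx conjC u).
Proof.
move=> d_ge uk0; rewrite mxform_hermitian sum_normC_spectral mulr_sumr.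
apply: ler_sum => j _; have [->|jk] := eqVneq j k.
  by rewrite uk0 normr0 expr0n !mulr0.
by rewrite ler_wpM2r ?exprn_ge0 ?d_ge.
Qed.

End HermitianSpectrum.

Lemma count_image_card (T : finType) (U : Type) (r : T -> U) (P : pred U) :
  count P [seq r j | j : T] = #|[pred j | P (r j)]|.
Proof.
rewrite count_map cardE /enum_mem size_filter count_filter.
by apply: eq_count => j; rewrite /= andbT.
Qed.

Section SortedSeq.
Variables (disp : Order.disp_t) (T : porderType disp) (x0 : T) (s : seq T).
Hypothesis s_sorted : sorted <=%O s.

Lemma sorted_le_last x : x \in s -> (x <= last x0 s)%O.
Proof.
move=> xs; rewrite -nth_last -(nth_index x0 xs).
have s_gt0 : (0 < size s)%N by case: (s) xs.
apply: (sorted_leq_nth le_trans lexx) => //; rewrite ?inE ?prednK ?index_mem //.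
by rewrite -ltnS prednK ?index_mem.
Qed.

Lemma sorted_nth_le_last i : (i < size s)%N -> (nth x0 s i <= last x0 s)%O.
Proof. by move=> i_lt; rewrite sorted_le_last // mem_nth. Qed.

Lemma sorted_count_not_ge_nth1 :
  (count (fun x => ~~ (nth x0 s 1 <= x)%O) s <= 1)%N.
Proof.
case: s s_sorted => [|a [|b t]] //=; first by case: (~~ _).
case/andP => _ bt; rewrite lexx.
have -> : count (fun x => ~~ (b <= x)%O) t = 0%N.
  apply/eqP; rewrite -leqn0 leqNgt -has_count; apply/hasPn => x.
  by move/(allP (order_path_min le_trans bt)) => ->.
by case: (~~ _).
Qed.

Lemma sorted_count_le_nth1 :
  (1 < size s)%N -> (2 <= count (fun x => (x <= nth x0 s 1)%O) s)%N.
Proof. by case: s s_sorted => [|a [|b t]] //= /andP [ab _] _; rewrite ab lexx. Qed.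

End SortedSeq.

Lemma sum_normC_const_delta (C : numClosedFieldType) n (a b : C) (i : 'I_n) :
  n%:R * \sum_l `|(const_mx a + b *: delta_mx 0 i : 'rV[C]_n) 0 l| ^+ 2 =
  `|n%:R * a + b| ^+ 2 + (n.-1)%:R * `|b| ^+ 2.
Proof.
rewrite (bigD1 i) //= (eq_bigr (fun _ => `|a| ^+ 2)) => [|l li]; last first.
  by rewrite !mxE (negbTE li) mulr0 addr0.
rewrite sumr_const cardC1 card_ord !mxE !eqxx mulr1 !normCK !rmorphD !rmorphM /=.
have nE : (n%:R : C) = (n.-1)%:R + 1.
  by rewrite natr1 prednK // (leq_ltn_trans (leq0n i) (ltn_ord i)).
by rewrite rmorph_nat -mulr_natl nE; ring.
Qed.

Section LaplacianSpectrum.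
Local Open Scope sesquilinear_scope.
Variables (C : numClosedFieldType) (n : nat) (G : 'M[C]_n) (s : seq C).
Hypotheses (Gsym : G^T = G) (G_ge0 : forall i j, 0 <= G i j).
Hypothesis G_connected : wconnected G.
Hypotheses (s_sorted : sorted <=%R s)
  (s_spectrum : char_poly (laplacian G) = \prod_(x <- s) ('X - x%:P)).
Implicit Types (u : 'rV[C]_n).

Local Notation L := (laplacian G).
Local Notation U := (spectralmx L).
Local Notation d := (spectral_diag L).

Lemma laplacian_hermitian : L \is hermsymmx.
Proof.
have L_real : map_mx conjC L = L.
  apply/matrixP => i j; rewrite mxE conj_Creal // laplacianE degvecE.
  by rewrite rpredB ?rpredM ?rpred_nat ?rpred_sum // => *; apply: ger0_real.
by apply/is_hermitianmxP; rewrite expr0 scale1r tr_laplacian // L_real.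
Qed.

Lemma mxform_laplacian_conj_ge0 u : 0 <= mxform L u (map_mx conjC u).
Proof.
rewrite -(pmulrn_lge0 _ (isT : 0 < 2)%N) mxform_laplacian_edges //.
by do 2!apply: sumr_ge0 => ? _; rewrite !mxE -rmorphB mulr_ge0 ?mul_conjC_ge0.
Qed.

Lemma mxform_laplacian_conj_eq0 u :
  mxform L u (map_mx conjC u) = 0 -> forall i j, u 0 i = u 0 j.
Proof.
move=> u0.
have term_ge0 i j :
    0 <= G i j * ((u 0 i - u 0 j) * (map_mx conjC u 0 i - map_mx conjC u 0 j)).
  by rewrite !mxE -rmorphB mulr_ge0 ?mul_conjC_ge0.
have sum0 : \sum_i \sum_j
    G i j * ((u 0 i - u 0 j) * (map_mx conjC u 0 i - map_mx conjC u 0 j)) = 0.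
  by rewrite -mxform_laplacian_edges // u0 mul0rn.
have edge i j : 0 < G i j -> u 0 i = u 0 j.
  move=> Gij.
  have row0 := psumr_eq0P (fun i _ => sumr_ge0 _ (fun j _ => term_ge0 i j)) sum0
    (i := i) isT.
  have /eqP := psumr_eq0P (fun j _ => term_ge0 i j) row0 (i := j) isT.
  by rewrite mulf_eq0 (gt_eqF Gij) !mxE -rmorphB mul_conjC_eq0 subr_eq0 => /eqP.
move=> i j; have /connectP [p p_path ->] := G_connected i j.
by elim: p i p_path => //= k p IH i /andP [/edge -> /IH].
Qed.

Lemma laplacian_spectrum_perm : perm_eq s [seq d 0 j | j : 'I_n].
Proof.
apply: prod_XsubC_eq; rewrite big_map big_enum -s_spectrum.
exact: char_poly_hermitian laplacian_hermitian.
Qed.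

Lemma count_laplacian_spectrum (P : pred C) :
  count P s = #|[pred j | P (d 0 j)]|.
Proof. by rewrite (permP laplacian_spectrum_perm) count_image_card. Qed.

Lemma laplacian_eigen_mem j : d 0 j \in s.
Proof. by rewrite (perm_mem laplacian_spectrum_perm) map_f ?mem_enum. Qed.

Lemma laplacian_eigen_ge0 j : 0 <= d 0 j.
Proof.
by rewrite spectral_diag_mxform ?laplacian_hermitian ?mxform_laplacian_conj_ge0.
Qed.

Lemma laplacian_eigen0_const j : d 0 j = 0 -> forall l, U j l = U j j.
Proof.
rewrite spectral_diag_mxform ?laplacian_hermitian //.
by move=> /mxform_laplacian_conj_eq0 row_const l; have := row_const l j; rewrite !mxE.
Qed.

(* Eigenvectors for 0 are constant, and two constant rows of a unitary matrix
   cannot be orthogonal. *)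
Lemma laplacian_eigen0_unique j k : d 0 j = 0 -> d 0 k = 0 -> j = k.
Proof.
move=> /laplacian_eigen0_const cj /laplacian_eigen0_const ck.
have row_dot l m : (forall p, U l p = U l l) -> (forall p, U m p = U m m) ->
    (l == m)%:R = n%:R * (U l l * (U m m)^*) :> C.
  move=> cl cm; have := unitarymxP (spectral_unitarymx L).
  move/(congr1 (fun A : 'M[C]_n => A l m)); rewrite !mxE => <-.
  rewrite (eq_bigr (fun _ => U l l * (U m m)^*)) => [|p _].
    by rewrite sumr_const card_ord mulr_natl.
  by rewrite !mxE cl cm.
have := row_dot j j cj cj; have := row_dot k k ck ck; rewrite !eqxx => dot_kk dot_jj.
apply/eqP; apply: contraT => jk.
have := row_dot j k cj ck; rewrite (negbTE jk) => dot_jk.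
have : n%:R * (U j j * (U j j)^*) * (n%:R * (U k k * (U k k)^*)) =
    n%:R * (U j j * (U k k)^*) * (n%:R * (U k k * (U j j)^*)) :> C by ring.
by rewrite -dot_jj -dot_kk -dot_jk mul1r mul0r => /eqP; rewrite oner_eq0.
Qed.

Lemma mxform_laplacian_le_last u :
  mxform L u (map_mx conjC u) <= last 0 s * \sum_i `|u 0 i| ^+ 2.
Proof.
apply: (mxform_hermitian_le laplacian_hermitian) => j.
by rewrite sorted_le_last // laplacian_eigen_mem.
Qed.

Hypothesis n_gt1 : (1 < n)%N.

Lemma algebraic_connectivity_gt0 : 0 < s`_1.
Proof.
have s1_in : s`_1 \in s.
  by rewrite mem_nth // (perm_size laplacian_spectrum_perm) size_map size_enum_ord.
have [m _ dm] : exists2 m, m \in enum 'I_n & s`_1 = d 0 m.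
  by apply/mapP; rewrite -(perm_mem laplacian_spectrum_perm).
rewrite lt_def {2}dm laplacian_eigen_ge0 andbT; apply/eqP => s1_0.
have := sorted_count_le_nth1 0 s_sorted.
rewrite (perm_size laplacian_spectrum_perm) size_map size_enum_ord.
rewrite count_laplacian_spectrum.
move=> /(_ n_gt1) /card_gt1P [j [k [/= dj dk /eqP[]]]].
have eigen0 l : d 0 l <= s`_1 -> d 0 l = 0.
  by move=> dl; apply/le_anti; rewrite laplacian_eigen_ge0 -s1_0 dl.
exact: laplacian_eigen0_unique (eigen0 _ dj) (eigen0 _ dk).
Qed.

Lemma exists_laplacian_eigen_ge_nth1 :
  exists k, forall j, j != k -> s`_1 <= d 0 j.
Proof.
have := sorted_count_not_ge_nth1 0 s_sorted.
rewrite count_laplacian_spectrum => card_le1.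
case: (pickP [pred j | ~~ (s`_1 <= d 0 j)]) => [k /= k_lt | none]; last first.
  by exists (Ordinal (ltnW n_gt1)) => j _; have /negbFE := none j.
exists k => j jk; apply: contraT => j_lt; move: card_le1; rewrite leqNgt => /negP[].
by apply/card_gt1P; exists j, k; rewrite !inE /= j_lt k_lt.
Qed.

Lemma fiedler_bound i : s`_1 * (n.-1)%:R <= n%:R * L i i.
Proof.
have [k k_min] := exists_laplacian_eigen_ge_nth1.
have s1_gt0 := algebraic_connectivity_gt0.
have n_gt0 : 0 < n%:R :> C by rewrite ltr0n (ltnW n_gt1).
set c1 := ((const_mx 1 : 'rV[C]_n) *m U^t*) 0 k.
set c2 := ((delta_mx 0 i : 'rV[C]_n) *m U^t*) 0 k.
(* Courant-Fischer: a vector of span(1, e_i) orthogonal to the bottom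
   eigenvector has Rayleigh quotient at least a(L). *)
have test_vector a b : a * c1 + b * c2 = 0 ->
    s`_1 * (`|n%:R * a + b| ^+ 2 + (n.-1)%:R * `|b| ^+ 2) <=
    n%:R * (`|b| ^+ 2 * L i i).
  move=> ab0; rewrite -(sum_normC_const_delta a b i) mulrCA ler_pM2l //.
  have uk0 : ((const_mx a + b *: delta_mx 0 i : 'rV[C]_n) *m U^t*) 0 k = 0.
    apply: etrans ab0.
    have -> : const_mx a = a *: (const_mx 1 : 'rV[C]_n).
      by apply/rowP => l; rewrite !mxE mulr1.
    by rewrite mulmxDl -!scalemxAl mxE [X in _ + X]mxE [X in X + _]mxE.
  have := mxform_hermitian_ge laplacian_hermitian k_min uk0.
  rewrite map_mxD map_const_mx map_mxZ map_delta_mx mxform_laplacian_const_delta //.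
  by rewrite normCK.
have [c1_0|c1_neq0] := eqVneq c1 0.
  (* Then 1 itself is such a vector, although its Rayleigh quotient is 0. *)
  have := test_vector 1 0; rewrite c1_0 mulr0 mul0r addr0 => /(_ erefl).
  rewrite normr0 expr0n /= mul0r !mulr0 !addr0 mulr1 pmulr_rle0 //.
  by rewrite lt_geF // exprn_gt0 // normr_gt0 gt_eqF.
have c1_gt0 : 0 < `|c1| ^+ 2 by rewrite exprn_gt0 // normr_gt0.
have := test_vector c2 (- c1) ltac:(ring); rewrite normrN => bound.
rewrite -(ler_pM2r c1_gt0) -!mulrA [L i i * _]mulrC; apply: le_trans bound.
by rewrite ler_wpM2l ?(ltW s1_gt0) // lerDr exprn_ge0.
Qed.

End LaplacianSpectrum.

Lemma map_laplacian (R S : comNzRingType) (f : {rmorphism R -> S}) n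
    (G : 'M[R]_n) :
  map_mx f (laplacian G) = laplacian (map_mx f G).
Proof.
rewrite /laplacian /degvec map_mxB map_diag_mx -map_trmx map_mxM map_const_mx.
by rewrite rmorph1.
Qed.

Section RealLaplacianSpectrum.
Variables (R : rcfType) (n : nat) (G : 'M[R]_n) (s : seq R).
Hypotheses (Gsym : G^T = G) (G_ge0 : forall i j, 0 <= G i j).
Hypothesis G_connected : wconnected G.
Hypotheses (s_sorted : sorted <=%R s)
  (s_spectrum : char_poly (laplacian G) = \prod_(x <- s) ('X - x%:P)).

Local Notation toC := (real_complex R).
Local Notation Gc := (map_mx toC G).

Let Gc_sym : Gc^T = Gc.
Proof. by rewrite map_trmx Gsym. Qed.

Let Gc_ge0 i j : 0 <= Gc i j.
Proof. by rewrite mxE ler0c. Qed.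

Let Gc_connected : wconnected Gc.
Proof.
move=> i j; rewrite (@eq_connect _ _ (fun x y => 0 < G x y)) // => x y.
by rewrite mxE ltcR.
Qed.

Let sC_sorted : sorted <=%R (map toC s).
Proof. by apply: homo_sorted s_sorted => x y; rewrite lecR. Qed.

Let sC_spectrum :
  char_poly (laplacian Gc) = \prod_(x <- map toC s) ('X - x%:P).
Proof.
rewrite -map_laplacian -map_char_poly s_spectrum rmorph_prod big_map.
by apply: eq_bigr => x _; exact: map_polyXsubC.
Qed.

Lemma size_laplacian_spectrum : size s = n.
Proof.
by apply: succn_inj; rewrite -(size_prod_XsubC s id) -s_spectrum size_char_poly.
Qed.

Let toC_real x : toC x \is Num.real.
Proof. by apply/complex_realP; exists x. Qed.

Let toC_real_vector (w : 'rV[R]_n) : map_mx conjC (map_mx toC w) = map_mx toC w.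
Proof. by apply/rowP => i; rewrite !mxE conj_Creal. Qed.

Lemma mxform_laplacian_le_last_real w :
  mxform (laplacian G) w w <= last 0 s * \sum_i w 0 i ^+ 2.
Proof.
rewrite -lecR map_mxform map_laplacian -{2}toC_real_vector.
apply: le_trans (mxform_laplacian_le_last Gc_sym Gc_ge0 sC_sorted sC_spectrum _) _.
have -> : \sum_i `|map_mx toC w 0 i| ^+ 2 = toC (\sum_i w 0 i ^+ 2).
  by rewrite rmorph_sum; apply: eq_bigr => i _; rewrite mxE rmorphXn real_normK.
by rewrite rmorphM (_ : last 0 (map toC s) = toC (last 0 s)) ?(last_map toC).
Qed.

Hypothesis n_gt1 : (1 < n)%N.

Lemma algebraic_connectivity_gt0_real : 0 < s`_1.
Proof.
rewrite -ltcR -(nth_map 0 0) ?size_laplacian_spectrum //.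
exact: (algebraic_connectivity_gt0 Gc_sym Gc_ge0 Gc_connected sC_sorted sC_spectrum).
Qed.

Lemma fiedler_bound_real i : s`_1 * (n.-1)%:R <= n%:R * laplacian G i i.
Proof.
rewrite -lecR !rmorphM !rmorph_nat -(nth_map 0 0) ?size_laplacian_spectrum //.
have := fiedler_bound Gc_sym Gc_ge0 Gc_connected sC_sorted sC_spectrum n_gt1 i.
by rewrite -map_laplacian mxE.
Qed.

Lemma fiedler_mxform_degree (w : 'rV[R]_n) : (forall i, G i i = 0) ->
  s`_1 * (n.-1)%:R / n%:R * \sum_i w 0 i ^+ 2 <= mxform (diag_mx (degvec G)^T) w w.
Proof.
move=> G_diag; rewrite mxform_degree mulr_sumr; apply: ler_sum => i _.
rewrite -expr2 ler_wpM2r ?sqr_ge0 // ler_pdivrMr ?ltr0n ?(ltnW n_gt1) //.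
by rewrite [_ * n%:R]mulrC -laplacian_diag // fiedler_bound_real.
Qed.

End RealLaplacianSpectrum.

Lemma rayleigh_ratio_bounds (R : realFieldType) (lambda mu N E Q theta m rho c : R) :
  0 < lambda -> 0 < mu -> 0 < N -> 0 < c -> c <= rho ->
  0 <= Q -> Q <= 2 * E -> Q <= rho * N -> E <= m * N -> c * N <= E ->
  theta * (lambda * N + mu * E) = lambda * N + mu * Q ->
  [/\ lambda / (lambda + mu * m) <= theta, theta <= 2 & theta <= rho / c].
Proof.
move=> lam_gt0 mu_gt0 N_gt0 c_gt0 c_le Q_ge0 Q_le2 Q_le E_le E_ge eq_theta.
have mu_ge0 := ltW mu_gt0; have c_ge0 := ltW c_gt0; have N_ge0 := ltW N_gt0.
have lamN_gt0 : 0 < lambda * N by rewrite mulr_gt0.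
have E_gt0 : 0 < E := lt_le_trans (mulr_gt0 c_gt0 N_gt0) E_ge.
have D_gt0 : 0 < lambda * N + mu * E by rewrite addr_gt0 ?mulr_gt0.
have muQ_ge0 : 0 <= mu * Q by rewrite mulr_ge0.
have theta_gt0 : 0 < theta.
  by rewrite -(pmulr_lgt0 _ D_gt0) eq_theta (lt_le_trans lamN_gt0) // lerDl.
have theta_ge0 := ltW theta_gt0.
have m_gt0 : 0 < m by rewrite -(pmulr_lgt0 _ N_gt0) (lt_le_trans E_gt0).
split.
- have gap : 0 <= theta * mu * (m * N - E).
    by apply: mulr_ge0; [exact: mulr_ge0 | rewrite subr_ge0].
  rewrite ler_pdivrMr ?addr_gt0 ?mulr_gt0 // -(ler_pM2r N_gt0); lra.
- have muQ_le : mu * Q <= mu * (2 * E) by rewrite ler_wpM2l.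
  rewrite -(ler_pM2r D_gt0); lra.
- have cQ_le : c * (mu * Q) <= c * (mu * (rho * N)) by rewrite !ler_wpM2l.
  have c_lamN : c * (lambda * N) <= rho * (lambda * N) by rewrite ler_wpM2r // ltW.
  have cN_le : rho * mu * (c * N) <= rho * mu * E.
    by rewrite ler_wpM2l // mulr_ge0 // (le_trans c_ge0).
  have c_theta : theta * c * (lambda * N + mu * E) = c * (lambda * N + mu * Q).
    by rewrite -eq_theta; ring.
  rewrite ler_pdivlMr // -(ler_pM2r D_gt0); lra.
Qed.







Theorem lemma4p6 (R : rcfType) (n : nat) (Gamma : 'M[R]_n)
  (lambda mu : R) (sL : seq R) (theta : R) :
  (2 <= n)%N ->
  Gamma^T = Gamma ->
  (forall i j, 0 <= Gamma i j <= 1) ->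
  (forall i, Gamma i i = 0) ->
  (forall i, exists j, j != i /\ 0 < Gamma i j) ->
  wconnected Gamma ->
  0 < lambda -> 0 < mu ->
  (* sL = eigenvalues of L in nondecreasing order, with multiplicity *)
  is_sorted_spectrum (laplacian Gamma) sL ->
  let eta := degvec Gamma in
  let L := laplacian Gamma in
  let A := lambda%:M + mu *: L in
  let Pa := diag_mx (\row_i A i i) in
  let rhoL := last 0 sL in          (* spectral radius = largest eigenvalue *)
  let aL := sL`_1 in                 (* algebraic connectivity *)
  let maxeta := \big[Num.max/0]_(i < n) eta i ord0 in
  eigenvalue (invmx Pa *m A) theta ->
  lambda / (lambda + mu * maxeta) <= theta /\
  theta <= Num.min 2 (n%:R / (n.-1)%:R * (rhoL / aL)).
Proof.
move=> n_gt1 Gsym G01 G_diag _ G_conn lam_gt0 mu_gt0 [s_sorted s_spec].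
move=> eta L A Pa rhoL aL maxeta eig.
have G_ge0 i j : 0 <= Gamma i j by case/andP: (G01 i j).
have [n_gt0 n1_gt0] : (0 < n)%N /\ (0 < n.-1)%N by case: (n) n_gt1 => [|[]].
have Pa_unit : Pa \in unitmx.
  exact: diag_laplacian_pencil_unit G_ge0 G_diag lam_gt0 (ltW mu_gt0).
have [w w_neq0] := eigenvalue_invmx_mxform Pa_unit eig.
rewrite [Pa]diag_laplacian_pencil // !mxform_pencil => eq_w.
set c := aL * (n.-1)%:R / n%:R.
have a_gt0 := algebraic_connectivity_gt0_real Gsym G_ge0 G_conn s_sorted s_spec n_gt1.
have a_le_rho : aL <= rhoL.
  by rewrite sorted_nth_le_last // (size_laplacian_spectrum s_spec).
have c_le_a : c <= aL.
  rewrite /c -mulrA ler_piMr ?(ltW a_gt0) // ler_pdivrMr ?ltr0n //.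
  by rewrite mul1r ler_nat leq_pred.
have [] := rayleigh_ratio_bounds lam_gt0 mu_gt0 (sumr_sqr_gt0 w_neq0)
  (_ : 0 < c) (le_trans c_le_a a_le_rho) (mxform_laplacian_ge0 Gsym G_ge0 w)
  (mxform_laplacian_le Gsym G_ge0 w)
  (mxform_laplacian_le_last_real Gsym G_ge0 s_sorted s_spec w)
  (mxform_degree_le_bigmax Gamma w)
  (fiedler_mxform_degree Gsym G_ge0 G_conn s_sorted s_spec n_gt1 w G_diag)
  (esym eq_w).
- by rewrite /c !mulr_gt0 ?invr_gt0 ?ltr0n.
move=> -> theta_le2 theta_le; split=> //; rewrite le_min theta_le2 /=.
suff -> : n%:R / (n.-1)%:R * (rhoL / aL) = rhoL / c by [].
by rewrite /c; field; rewrite !gt_eqF ?ltr0n.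
Qed.
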